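(* Let $\mathbb{X}$ be a real or complex Banach algebra with identity, $\mathcal{G}$ its group of units, and $g_n:\mathbb{X}\to\mathbb{X}$ ($n\ge0$) arbitrary functions. Let $b\in\mathcal{G}$ with $|b|<1$ and $a_0,a_1\in\mathbb{X}$ with $a_0b+a_1=b^2$. Consider $$x_{n+1}=a_0x_n+a_1x_{n-1}+g_n(x_n-bx_{n-1}),\quad n\ge0. \tag{S}$$ If $x_0,x_{-1}\in\mathbb{X}$ are initial values such that the solution of the first-order equation $$t_{n+1}=(a_0-b)t_n+g_n(t_n),\quad n\ge0,$$ with initial value $t_0=x_0-bx_{-1}$ converges to $0$, then the solution of (S) with initial values $x_0,x_{-1}$ converges to $0$. In particular, if $0$ attracts all solutions of the first-order equation, then $0$ attracts all solutions of (S).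
   Context: A Banach algebra with identity is a Banach space $\mathbb{X}$ (norm $|\cdot|$) with an associative bilinear multiplication satisfying $|xy|\le|x||y|$ and identity $1$ with $|1|=1$; $\mathcal{G}$ is the set of invertible elements. Convergence is in norm. *)

From Stdlib Require Import Reals Lra.
Open Scope R_scope.

(* A real Banach algebra with identity (a complex Banach algebra is in
   particular a real one by restriction of scalars). *)
Record BanachAlgebra := {
  ba_car :> Type;
  ba_zero : ba_car;
  ba_one : ba_car;
  ba_add : ba_car -> ba_car -> ba_car;
  ba_opp : ba_car -> ba_car;
  ba_mul : ba_car -> ba_car -> ba_car;
  ba_scal : R -> ba_car -> ba_car;
  ba_norm : ba_car -> R;
  ba_addA : forall x y z, ba_add x (ba_add y z) = ba_add (ba_add x y) z;
  ba_addC : forall x y, ba_add x y = ba_add y x;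
  ba_add0 : forall x, ba_add x ba_zero = x;
  ba_addN : forall x, ba_add x (ba_opp x) = ba_zero;
  ba_scal1 : forall x, ba_scal 1 x = x;
  ba_scalA : forall r s x, ba_scal r (ba_scal s x) = ba_scal (r * s) x;
  ba_scalDr : forall r x y, ba_scal r (ba_add x y) = ba_add (ba_scal r x) (ba_scal r y);
  ba_scalDl : forall r s x, ba_scal (r + s) x = ba_add (ba_scal r x) (ba_scal s x);
  ba_mulA : forall x y z, ba_mul x (ba_mul y z) = ba_mul (ba_mul x y) z;
  ba_mul1l : forall x, ba_mul ba_one x = x;
  ba_mul1r : forall x, ba_mul x ba_one = x;
  ba_mulDl : forall x y z, ba_mul (ba_add x y) z = ba_add (ba_mul x z) (ba_mul y z);
  ba_mulDr : forall x y z, ba_mul x (ba_add y z) = ba_add (ba_mul x y) (ba_mul x z);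
  ba_scal_mull : forall r x y, ba_mul (ba_scal r x) y = ba_scal r (ba_mul x y);
  ba_scal_mulr : forall r x y, ba_mul x (ba_scal r y) = ba_scal r (ba_mul x y);
  ba_norm_ge0 : forall x, 0 <= ba_norm x;
  ba_norm_eq0 : forall x, ba_norm x = 0 -> x = ba_zero;
  ba_norm_triangle : forall x y, ba_norm (ba_add x y) <= ba_norm x + ba_norm y;
  ba_norm_scal : forall r x, ba_norm (ba_scal r x) = Rabs r * ba_norm x;
  ba_norm_mul : forall x y, ba_norm (ba_mul x y) <= ba_norm x * ba_norm y;
  ba_norm_one : ba_norm ba_one = 1;
  ba_complete : forall u : nat -> ba_car,
    (forall eps, 0 < eps -> exists N, forall m n, (N <= m)%nat -> (N <= n)%nat ->
        ba_norm (ba_add (u m) (ba_opp (u n))) < eps) ->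
    exists l, forall eps, 0 < eps -> exists N, forall n, (N <= n)%nat ->
        ba_norm (ba_add (u n) (ba_opp l)) < eps
}.

Arguments ba_zero {_}. Arguments ba_one {_}. Arguments ba_add {_}.
Arguments ba_opp {_}. Arguments ba_mul {_}. Arguments ba_scal {_}.
Arguments ba_norm {_}.

Definition ba_sub {X : BanachAlgebra} (x y : X) : X := ba_add x (ba_opp y).

Definition invertible {X : BanachAlgebra} (b : X) : Prop :=
  exists c : X, ba_mul b c = ba_one /\ ba_mul c b = ba_one.

Definition conv0 {X : BanachAlgebra} (u : nat -> X) : Prop :=
  forall eps, 0 < eps -> exists N, forall n, (N <= n)%nat -> ba_norm (u n) < eps.

Definition first_order_sol {X : BanachAlgebra} (a0 b : X) (g : nat -> X -> X)
  (t : nat -> X) : Prop :=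
  forall n, t (S n) = ba_add (ba_mul (ba_sub a0 b) (t n)) (g n (t n)).

(* y solves (S) with the index shift y k = x_{k-1}, k >= 0:
   x_{n+1} = a0 x_n + a1 x_{n-1} + g_n(x_n - b x_{n-1}) *)
Definition S_sol {X : BanachAlgebra} (a0 a1 b : X) (g : nat -> X -> X)
  (y : nat -> X) : Prop :=
  forall n, y (S (S n)) =
    ba_add (ba_add (ba_mul a0 (y (S n))) (ba_mul a1 (y n)))
           (g n (ba_sub (y (S n)) (ba_mul b (y n)))).

(* Since a0 b + a1 = b^2, the operator polynomial z^2 - a0 z - a1 has the
   "root" b on the right, and (S) factors through the residual
   z_n = x_n - b x_{n-1}: a direct computation gives
       z_{n+1} = (a0 - b) z_n + g_n(z_n),
   i.e. the residual solves the first-order equation, with z_0 = x_0 - b x_{-1}.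
   By uniqueness of solutions of the first-order recursion, z = t.  Finally
   x_n = z_{n-1} + b x_{n-1} gives |x_n| <= |b| |x_{n-1}| + |z_{n-1}|, and a
   real sequence obeying u_{n+1} <= q u_n + v_n with 0 <= q < 1 and v_n -> 0
   tends to 0. *)

From Stdlib Require Import Reals Lra Lia.
Open Scope R_scope.

Section Algebra.
Variable X : BanachAlgebra.
Implicit Types x y z : X.

Lemma add0l x : ba_add ba_zero x = x.
Proof. rewrite ba_addC. apply ba_add0. Qed.

Lemma opp_uniq x y : ba_add x y = ba_zero -> y = ba_opp x.
Proof.
  intro H. rewrite <- (ba_add0 X y), <- (ba_addN X x), ba_addA.
  rewrite (ba_addC X y x), H. apply add0l.
Qed.

Lemma add_idem_0 x y : ba_add x y = x -> y = ba_zero.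
Proof.
  intro H. transitivity (ba_add (ba_add (ba_opp x) x) y).
  - rewrite (ba_addC X (ba_opp x)), ba_addN. symmetry. apply add0l.
  - rewrite <- ba_addA, H, ba_addC. apply ba_addN.
Qed.

Lemma mul0l x : ba_mul ba_zero x = ba_zero.
Proof. apply (add_idem_0 (ba_mul ba_zero x)). rewrite <- ba_mulDl, ba_add0. reflexivity. Qed.

Lemma mul0r x : ba_mul x ba_zero = ba_zero.
Proof. apply (add_idem_0 (ba_mul x ba_zero)). rewrite <- ba_mulDr, ba_add0. reflexivity. Qed.

Lemma mul_oppl x y : ba_mul (ba_opp x) y = ba_opp (ba_mul x y).
Proof. apply opp_uniq. rewrite <- ba_mulDl, ba_addN. apply mul0l. Qed.

Lemma mul_oppr x y : ba_mul x (ba_opp y) = ba_opp (ba_mul x y).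
Proof. apply opp_uniq. rewrite <- ba_mulDr, ba_addN. apply mul0r. Qed.

Lemma opp_opp x : ba_opp (ba_opp x) = x.
Proof. symmetry. apply opp_uniq. rewrite ba_addC. apply ba_addN. Qed.

Lemma sub_addK x y : ba_add (ba_sub x y) y = x.
Proof.
  unfold ba_sub. rewrite <- ba_addA, (ba_addC X (ba_opp y)), ba_addN.
  apply ba_add0.
Qed.

Lemma factor_step (a0 a1 b u v w : X) :
  ba_add (ba_mul a0 b) a1 = ba_mul b b ->
  ba_sub (ba_add (ba_add (ba_mul a0 u) (ba_mul a1 v)) w) (ba_mul b u)
  = ba_add (ba_mul (ba_sub a0 b) (ba_sub u (ba_mul b v))) w.
Proof.
  intro Ha.
  assert (Ha1 : ba_mul a1 v =
                ba_add (ba_mul (ba_mul b b) v) (ba_opp (ba_mul (ba_mul a0 b) v))).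
  { rewrite <- Ha, ba_mulDl, (ba_addC X (ba_mul (ba_mul a0 b) v)).
    rewrite <- ba_addA, ba_addN, ba_add0. reflexivity. }
  unfold ba_sub. rewrite Ha1.
  rewrite ba_mulDl, !ba_mulDr, !mul_oppl, !mul_oppr, opp_opp, !ba_mulA.
  set (A := ba_mul a0 u). set (B := ba_mul b u).
  set (C := ba_mul (ba_mul a0 b) v). set (D := ba_mul (ba_mul b b) v).
  (* both sides are the sum of A, -C, -B, D, w; regroup by commutativity *)
  rewrite <- !ba_addA. f_equal.
  rewrite ba_addA, (ba_addC X D (ba_opp C)), <- ba_addA. f_equal.
  rewrite (ba_addC X w (ba_opp B)), ba_addA, (ba_addC X D (ba_opp B)), <- ba_addA.
  reflexivity.
Qed.

End Algebra.

(* The residual z_n = y_{n+1} - b y_n of a sequence y (in the shifted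
   indexing of S_sol, this is x_n - b x_{n-1}). *)
Definition residual {X : BanachAlgebra} (b : X) (y : nat -> X) (n : nat) : X :=
  ba_sub (y (S n)) (ba_mul b (y n)).

Lemma residual_first_order (X : BanachAlgebra) (g : nat -> X -> X) (b a0 a1 : X)
  (y : nat -> X) :
  ba_add (ba_mul a0 b) a1 = ba_mul b b ->
  S_sol a0 a1 b g y -> first_order_sol a0 b g (residual b y).
Proof. intros Ha Hy n. unfold residual. rewrite Hy. apply factor_step, Ha. Qed.

Lemma first_order_unique (X : BanachAlgebra) (g : nat -> X -> X) (a0 b : X)
  (t s : nat -> X) :
  first_order_sol a0 b g t -> first_order_sol a0 b g s ->
  t 0%nat = s 0%nat -> forall n, t n = s n.
Proof.
  intros Ht Hs H0 n. induction n as [|n IH]; [exact H0|].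
  rewrite Ht, Hs, IH. reflexivity.
Qed.

Lemma contraction_unroll (u v : nat -> R) (q d : R) (N : nat) :
  0 <= q -> 0 <= d ->
  (forall n, u (S n) <= q * u n + v n) ->
  (forall n, (N <= n)%nat -> v n < d * (1 - q)) ->
  forall k, u (N + k)%nat <= q ^ k * u N + d.
Proof.
  intros q0 d0 Hu Hv k. induction k as [|k IH].
  - rewrite Nat.add_0_r. simpl. lra.
  - rewrite Nat.add_succ_r. eapply Rle_trans; [apply Hu|].
    assert (v (N + k)%nat < d * (1 - q)) by (apply Hv; lia).
    assert (q * u (N + k)%nat <= q * (q ^ k * u N + d))
      by (apply Rmult_le_compat_l; lra).
    simpl. nra.
Qed.

Lemma contraction_to_0 (u v : nat -> R) (q : R) :
  0 <= q < 1 -> (forall n, 0 <= u n) ->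
  (forall n, u (S n) <= q * u n + v n) ->
  (forall eps, 0 < eps -> exists N, forall n, (N <= n)%nat -> v n < eps) ->
  forall eps, 0 < eps -> exists N, forall n, (N <= n)%nat -> u n < eps.
Proof.
  intros [q0 q1] u0 Hu Hv eps Heps.
  destruct (Hv (eps / 2 * (1 - q))) as [N1 HN1]; [nra|].
  pose proof (contraction_unroll u v q (eps / 2) N1 q0 ltac:(lra) Hu HN1) as Hk.
  set (M := u N1) in Hk.
  assert (M0 : 0 <= M) by apply u0.
  destruct (pow_lt_1_zero q ltac:(rewrite Rabs_right; lra) (eps / 2 / (M + 1)))
    as [N2 HN2]; [apply Rdiv_lt_0_compat; lra|].
  exists (N1 + N2)%nat. intros n Hn.
  replace n with (N1 + (n - N1))%nat by lia.
  eapply Rle_lt_trans; [apply Hk|].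
  specialize (HN2 (n - N1)%nat ltac:(lia)).
  assert (0 <= q ^ (n - N1)) by (apply pow_le; lra).
  rewrite Rabs_right in HN2 by lra.
  assert (q ^ (n - N1) * (M + 1) < eps / 2).
  { apply (Rmult_lt_compat_r (M + 1)) in HN2; [|lra].
    unfold Rdiv in HN2 at 1. rewrite Rmult_assoc, Rinv_l in HN2 by lra. lra. }
  nra.
Qed.

(* If |b| < 1 and the residual of y tends to 0, then y tends to 0:
   |y_{n+1}| <= |b| |y_n| + |z_n|. *)
Lemma conv0_of_residual (X : BanachAlgebra) (b : X) (y : nat -> X) :
  ba_norm b < 1 -> conv0 (residual b y) -> conv0 y.
Proof.
  intros Hb Hz. unfold conv0.
  apply (contraction_to_0 (fun n => ba_norm (y n))
           (fun n => ba_norm (residual b y n)) (ba_norm b)).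
  - split; [apply ba_norm_ge0|exact Hb].
  - intro; apply ba_norm_ge0.
  - intro n. rewrite <- (sub_addK X (y (S n)) (ba_mul b (y n))).
    eapply Rle_trans; [apply ba_norm_triangle|].
    pose proof (ba_norm_mul X b (y n)). unfold residual. lra.
  - exact Hz.
Qed.

Theorem theorem2 (X : BanachAlgebra) (g : nat -> X -> X) (b a0 a1 : X)
  (Hb : invertible b) (Hbn : ba_norm b < 1)
  (Ha : ba_add (ba_mul a0 b) a1 = ba_mul b b) :
  (forall (x0 xm1 : X) (t y : nat -> X),
     t 0%nat = ba_sub x0 (ba_mul b xm1) -> first_order_sol a0 b g t ->
     y 0%nat = xm1 -> y 1%nat = x0 -> S_sol a0 a1 b g y ->
     conv0 t -> conv0 y)
  /\
  ((forall t : nat -> X, first_order_sol a0 b g t -> conv0 t) ->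
   forall y : nat -> X, S_sol a0 a1 b g y -> conv0 y).
Proof.
  split.
  - intros x0 xm1 t y Ht0 Ht Hy0 Hy1 Hy Hc.
    apply (conv0_of_residual X b y Hbn).
    assert (Hzt : forall n, residual b y n = t n).
    { apply (first_order_unique X g a0 b);
        [apply (residual_first_order X g b a0 a1 y Ha Hy) | exact Ht |].
      unfold residual. rewrite Ht0, Hy0, Hy1. reflexivity. }
    intros eps Heps. destruct (Hc eps Heps) as [N HN].
    exists N. intros n Hn. rewrite Hzt. apply HN, Hn.
  - intros Hall y Hy.
    apply (conv0_of_residual X b y Hbn), Hall.
    apply (residual_first_order X g b a0 a1 y Ha Hy).
Qed.
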